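(* Let $C$ be a circle with centre $o$ and radius $r>0$, and let $p'$ be a point with $\lambda=|op'|<r$. Consider all triangles $\triangle abc$ with $a,b,c$ on $C$ and $p'\in\triangle abc$, and let $\mathrm{MinMax}$ be the minimum, over all such triangles, of the length of the longest edge. Then (1) if $\tfrac12 r\le\lambda<r$, $\mathrm{MinMax}=2\sqrt{r^2-\lambda^2}$; (2) if $0\le\lambda\le\tfrac12 r$, $\mathrm{MinMax}=\sqrt3\,r$. *)

From Stdlib Require Import Reals.
Open Scope R_scope.

Definition point := (R * R)%type.

Definition edist (p q : point) : R :=
  sqrt ((fst p - fst q) ^ 2 + (snd p - snd q) ^ 2).

Definition on_circle (o : point) (r : R) (p : point) : Prop :=
  edist o p = r.

Definition in_triangle (a b c p : point) : Prop :=
  exists s t u : R, 0 <= s /\ 0 <= t /\ 0 <= u /\ s + t + u = 1 /\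
    fst p = s * fst a + t * fst b + u * fst c /\
    snd p = s * snd a + t * snd b + u * snd c.

Definition max_edge (a b c : point) : R :=
  Rmax (edist a b) (Rmax (edist b c) (edist c a)).

Definition admissible (o : point) (r : R) (p a b c : point) : Prop :=
  a <> b /\ b <> c /\ c <> a /\
  on_circle o r a /\ on_circle o r b /\ on_circle o r c /\
  in_triangle a b c p.

Definition is_MinMax (o : point) (r : R) (p : point) (m : R) : Prop :=
  (exists a b c, admissible o r p a b c /\ max_edge a b c = m) /\
  (forall a b c, admissible o r p a b c -> m <= max_edge a b c).

(* Lower bound.  Write the centre o in barycentric coordinates (wa, wb, wc)
   with respect to an admissible triangle abc, normalised to a positive sum
   (possible because three distinct points of a circle are not collinear).
   - If all weights are nonnegative (o lies in the triangle), the identity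
       r^2 (wa + wb + wc)^2 = wa wb |ab|^2 + wb wc |bc|^2 + wc wa |ca|^2
     forces some edge to satisfy |ab|^2 >= 3 r^2.
   - If a weight is negative, say wc < 0, then c, and hence p', lies on the
     far side of the chord ab from o; the chord's midpoint m therefore
     satisfies |m| <= |op'|, so |ab|^2 = 4 (r^2 - |m|^2) >= 4 (r^2 - lam^2).
   Hence the longest edge is at least sqrt (min (3 r^2, 4 (r^2 - lam^2))).

   Upper bound.  For lam <= r/2 the inscribed equilateral triangle (edges
   sqrt 3 r) contains p'; for lam > 0 the triangle made of the chord through
   p' perpendicular to op' and the far end of the diameter through p'
   contains p' and has longest edge 2 sqrt (r^2 - lam^2). *)

From Stdlib Require Import Reals Lra Psatz.
Open Scope R_scope.

Definition sqdist (p q : point) : R := (fst p - fst q)^2 + (snd p - snd q)^2.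
Definition norm2 (p : point) : R := fst p ^ 2 + snd p ^ 2.

Lemma sqdist_nonneg (p q : point) : 0 <= sqdist p q.
Proof. unfold sqdist; apply Rplus_le_le_0_compat; apply pow2_ge_0. Qed.

Lemma edist_sq (p q : point) : edist p q ^ 2 = sqdist p q.
Proof. apply pow2_sqrt, sqdist_nonneg. Qed.

Lemma edist_of_sqdist (p q : point) (d : R) : 0 <= d -> sqdist p q = d^2 -> edist p q = d.
Proof. intros hd e; unfold edist; fold (sqdist p q); rewrite e; apply sqrt_pow2, hd. Qed.

Lemma edist_le_of_sqdist (p q : point) (d : R) :
  0 <= d -> sqdist p q <= d^2 -> edist p q <= d.
Proof.
intros hd e; unfold edist; fold (sqdist p q).
rewrite <- (sqrt_pow2 d hd); apply sqrt_le_1_alt, e.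
Qed.

Lemma sqdist_pos_of_neq (p q : point) : p <> q -> 0 < sqdist p q.
Proof.
destruct p as [p1 p2], q as [q1 q2]; unfold sqdist; simpl; intro hneq.
destruct (Rle_or_lt ((p1 - q1)^2 + (p2 - q2)^2) 0) as [l|l]; [|exact l].
exfalso; apply hneq.
assert (h0 : Rsqr (p1 - q1) + Rsqr (p2 - q2) = 0).
{ rewrite !Rsqr_pow2. pose proof (pow2_ge_0 (p1 - q1)). pose proof (pow2_ge_0 (p2 - q2)). lra. }
apply Rplus_sqr_eq_0 in h0; destruct h0; f_equal; lra.
Qed.

Lemma neq_of_sqdist_pos (p q : point) : 0 < sqdist p q -> p <> q.
Proof. intros h e; subst; unfold sqdist in h; lra. Qed.

Lemma on_circle_sqdist (o a : point) (r : R) : on_circle o r a -> sqdist o a = r^2.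
Proof. intro h; rewrite <- edist_sq; unfold on_circle in h; now rewrite h. Qed.

Lemma on_circle_of_sqdist (o a : point) (r : R) : 0 <= r -> sqdist o a = r^2 -> on_circle o r a.
Proof. exact (edist_of_sqdist o a r). Qed.

Lemma sqrt_le_max_edge (a b c : point) (K : R) :
  K <= sqdist a b \/ K <= sqdist b c \/ K <= sqdist c a -> sqrt K <= max_edge a b c.
Proof.
unfold max_edge, edist; fold (sqdist a b) (sqdist b c) (sqdist c a).
intros [h|[h|h]]; apply sqrt_le_1_alt in h.
- eapply Rle_trans; [exact h | apply Rmax_l].
- eapply Rle_trans; [exact h | eapply Rle_trans; [apply Rmax_l | apply Rmax_r]].
- eapply Rle_trans; [exact h | eapply Rle_trans; [apply Rmax_r | apply Rmax_r]].
Qed.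

Lemma sqrt_sq_mult (k x : R) : 0 <= k -> 0 <= x -> sqrt (k^2 * x) = k * sqrt x.
Proof.
intros hk hx; rewrite sqrt_mult by (auto; apply pow2_ge_0).
now rewrite sqrt_pow2.
Qed.

Section ChordOfCircle.
Variables r a1 a2 b1 b2 : R.
Hypotheses (ha : a1^2 + a2^2 = r^2) (hb : b1^2 + b2^2 = r^2).

(* If c lies on the far side of the line ab from the centre, i.e.
   c . (a + b) >= r^2 + a . b = a . (a + b), then every point p of the triangle
   abc satisfies |ab|^2 >= 4 (r^2 - |p|^2): with m = a + b, we get p . m >= |m|^2/2,
   so |m| <= 2 |p| by Cauchy-Schwarz, while |ab|^2 = 4 r^2 - |m|^2. *)
Lemma chord_far_side_bound (c1 c2 p1 p2 s t u : R) :
  0 <= s -> 0 <= t -> 0 <= u -> s + t + u = 1 ->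
  p1 = s*a1 + t*b1 + u*c1 -> p2 = s*a2 + t*b2 + u*c2 ->
  r^2 + (a1*b1 + a2*b2) <= c1*(a1+b1) + c2*(a2+b2) ->
  4*(r^2 - (p1^2 + p2^2)) <= (a1-b1)^2 + (a2-b2)^2.
Proof.
intros hs ht hu hstu hp1 hp2 hc.
set (m1 := a1 + b1); set (m2 := a2 + b2); set (k := r^2 + (a1*b1 + a2*b2)).
assert (hm : m1^2 + m2^2 = 2*k) by (unfold m1, m2, k; nra).
assert (hchord : (a1-b1)^2 + (a2-b2)^2 = 4*r^2 - (m1^2 + m2^2)) by (unfold m1, m2; nra).
assert (hpm : k <= p1*m1 + p2*m2).
{ assert (hsupp : a1*m1 + a2*m2 = k /\ b1*m1 + b2*m2 = k) by (unfold m1, m2, k; split; nra).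
  assert (e : p1*m1 + p2*m2 = s*(a1*m1+a2*m2) + t*(b1*m1+b2*m2) + u*(c1*m1+c2*m2))
    by (rewrite hp1, hp2; ring).
  destruct hsupp as [ea eb]; rewrite ea, eb in e. fold m1 m2 k in hc. nra. }
assert (hcs : (p1*m1 + p2*m2)^2 <= (p1^2 + p2^2)*(m1^2 + m2^2)).
{ assert (0 <= (p1*m2 - p2*m1)^2) by apply pow2_ge_0. nra. }
assert (hk : 0 <= k) by nra.
nra.
Qed.
End ChordOfCircle.

(* A triangle abc inscribed in the circle of radius r centred at the origin,
   and weights (wa, wb, wc) with wa a + wb b + wc c = 0, i.e. (up to scaling)
   the barycentric coordinates of the centre. *)
Section TriangleOnCircle.
Variables r a1 a2 b1 b2 c1 c2 : R.
Hypotheses (ha : a1^2 + a2^2 = r^2) (hb : b1^2 + b2^2 = r^2) (hc : c1^2 + c2^2 = r^2).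

(* A negative weight at c means that c lies on the far side of the chord ab
   from the centre (dot the vanishing combination with a + b). *)
Lemma negative_weight_far_side (wa wb wc : R) :
  wa*a1 + wb*b1 + wc*c1 = 0 -> wa*a2 + wb*b2 + wc*c2 = 0 ->
  0 < wa + wb + wc -> wc < 0 ->
  r^2 + (a1*b1 + a2*b2) <= c1*(a1+b1) + c2*(a2+b2).
Proof.
intros h1 h2 hsum hneg.
set (k := r^2 + (a1*b1 + a2*b2)).
assert (hk : 0 <= k).
{ unfold k. assert (0 <= (a1+b1)^2 + (a2+b2)^2) by (apply Rplus_le_le_0_compat; apply pow2_ge_0). nra. }
assert (e : wc*(c1*(a1+b1) + c2*(a2+b2) - k) =
  (wa*a1 + wb*b1 + wc*c1)*(a1+b1) + (wa*a2 + wb*b2 + wc*c2)*(a2+b2)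
  - wa*((a1^2 + a2^2) - r^2) - wb*((b1^2 + b2^2) - r^2) - (wa + wb + wc)*k)
  by (unfold k; ring).
rewrite h1, h2, ha, hb in e.
nra.
Qed.

Lemma weighted_edge_identity (wa wb wc : R) :
  wa*a1 + wb*b1 + wc*c1 = 0 -> wa*a2 + wb*b2 + wc*c2 = 0 ->
  r^2 * (wa + wb + wc)^2 =
    wa*wb*((a1-b1)^2 + (a2-b2)^2) + wb*wc*((b1-c1)^2 + (b2-c2)^2)
    + wc*wa*((c1-a1)^2 + (c2-a2)^2).
Proof.
intros h1 h2.
assert (e : r^2 * (wa + wb + wc)^2 =
    (wa*a1 + wb*b1 + wc*c1)^2 + (wa*a2 + wb*b2 + wc*c2)^2
    + wa*wb*((a1-b1)^2 + (a2-b2)^2) + wb*wc*((b1-c1)^2 + (b2-c2)^2)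
    + wc*wa*((c1-a1)^2 + (c2-a2)^2)
    + (wa*(wa + wb + wc))*(r^2 - (a1^2 + a2^2))
    + (wb*(wa + wb + wc))*(r^2 - (b1^2 + b2^2))
    + (wc*(wa + wb + wc))*(r^2 - (c1^2 + c2^2))) by ring.
rewrite h1, h2, ha, hb, hc in e. rewrite e. ring.
Qed.

Lemma centre_inside_long_edge (wa wb wc : R) :
  0 < r ->
  wa*a1 + wb*b1 + wc*c1 = 0 -> wa*a2 + wb*b2 + wc*c2 = 0 ->
  0 <= wa -> 0 <= wb -> 0 <= wc -> 0 < wa + wb + wc ->
  3*r^2 <= (a1-b1)^2 + (a2-b2)^2 \/ 3*r^2 <= (b1-c1)^2 + (b2-c2)^2 \/
  3*r^2 <= (c1-a1)^2 + (c2-a2)^2.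
Proof.
intros hr h1 h2 pa pb pc hsum.
pose proof (weighted_edge_identity wa wb wc h1 h2) as hid.
set (eab := (a1-b1)^2 + (a2-b2)^2) in *; set (ebc := (b1-c1)^2 + (b2-c2)^2) in *;
set (eca := (c1-a1)^2 + (c2-a2)^2) in *.
destruct (Rle_or_lt (3*r^2) eab) as [l1|l1]; [now left|].
destruct (Rle_or_lt (3*r^2) ebc) as [l2|l2]; [now right; left|].
destruct (Rle_or_lt (3*r^2) eca) as [l3|l3]; [now right; right|].
exfalso.
(* 3 (wa wb + wb wc + wc wa) <= (wa + wb + wc)^2, so the identity forces every
   product of two weights to vanish, and then r^2 (wa + wb + wc)^2 = 0. *)
assert (hamgm : 3*(wa*wb + wb*wc + wc*wa) <= (wa + wb + wc)^2).
{ assert (0 <= (wa-wb)^2 + (wb-wc)^2 + (wc-wa)^2)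
    by (repeat apply Rplus_le_le_0_compat; apply pow2_ge_0).
  nra. }
assert (t1 : 0 <= wa*wb*(3*r^2 - eab)) by (apply Rmult_le_pos; nra).
assert (t2 : 0 <= wb*wc*(3*r^2 - ebc)) by (apply Rmult_le_pos; nra).
assert (t3 : 0 <= wc*wa*(3*r^2 - eca)) by (apply Rmult_le_pos; nra).
assert (zab : wa*wb = 0) by nra.
assert (zbc : wb*wc = 0) by nra.
assert (zca : wc*wa = 0) by nra.
rewrite zab, zbc, zca in hid.
assert (0 < r^2 * (wa + wb + wc)^2) by (apply Rmult_lt_0_compat; apply pow_lt; lra).
lra.
Qed.

(* Three distinct points of a circle are never collinear: their oriented
   area (twice the signed area of the triangle) is nonzero.  Otherwise
   u = b - a and v = c - a are parallel chords from a, which forces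
   |u|^2 = |v|^2 = u . v, i.e. b = c. *)
Lemma circle_points_not_collinear :
  0 < (a1-b1)^2 + (a2-b2)^2 -> 0 < (b1-c1)^2 + (b2-c2)^2 -> 0 < (c1-a1)^2 + (c2-a2)^2 ->
  (b1*c2 - b2*c1) + (c1*a2 - c2*a1) + (a1*b2 - a2*b1) <> 0.
Proof.
intros dab dbc dca hzero.
set (u1 := b1 - a1); set (u2 := b2 - a2); set (v1 := c1 - a1); set (v2 := c2 - a2).
set (uu := u1^2 + u2^2); set (vv := v1^2 + v2^2); set (uv := u1*v1 + u2*v2).
assert (hcross : u1*v2 - u2*v1 = 0) by (unfold u1, u2, v1, v2; lra).
assert (huu : 0 < uu) by (unfold uu, u1, u2; nra).
(* b = a + u and c = a + v lie on the circle: 2 a . u = - |u|^2, likewise for v *)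
assert (hu : 2*(a1*u1 + a2*u2) = - uu) by (unfold uu, u1, u2; nra).
assert (hv : 2*(a1*v1 + a2*v2) = - vv) by (unfold vv, v1, v2; nra).
assert (hvv0 : 0 < vv) by (unfold vv, v1, v2; nra).
assert (p1 : uu*v1 = uv*u1).
{ assert (e : uu*v1 - uv*u1 = - u2*(u1*v2 - u2*v1)) by (unfold uu, uv; ring).
  rewrite hcross in e. lra. }
assert (p2 : uu*v2 = uv*u2).
{ assert (e : uu*v2 - uv*u2 = u1*(u1*v2 - u2*v1)) by (unfold uu, uv; ring).
  rewrite hcross in e. lra. }
assert (hlag : uu*vv = uv^2).
{ assert (e : uu*vv - uv^2 = (u1*v2 - u2*v1)^2) by (unfold uu, vv, uv; ring).
  rewrite hcross in e. lra. }
assert (hvv : vv = uv).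
{ assert (e : uu*(a1*v1 + a2*v2) = uv*(a1*u1 + a2*u2)).
  { transitivity (a1*(uu*v1) + a2*(uu*v2)); [ring|]. rewrite p1, p2. ring. }
  assert (e2 : uu*(vv - uv) = 0).
  { transitivity (uv*(2*(a1*u1 + a2*u2)) - uu*(2*(a1*v1 + a2*v2))).
    - rewrite hu, hv. ring.
    - replace (uu*(2*(a1*v1 + a2*v2))) with (2*(uu*(a1*v1 + a2*v2))) by ring.
      rewrite e. ring. }
  destruct (Rmult_integral _ _ e2); lra. }
assert (huv : uu = vv).
{ rewrite <- hvv in hlag.
  assert (e2 : vv*(uu - vv) = 0) by lra.
  destruct (Rmult_integral _ _ e2); lra. }
assert (hbc : (b1-c1)^2 + (b2-c2)^2 = uu + vv - 2*uv) by (unfold uu, vv, uv, u1, u2, v1, v2; ring).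
lra.
Qed.
End TriangleOnCircle.

Lemma negative_weight_long_chord (r a1 a2 b1 b2 c1 c2 p1 p2 s t u wa wb wc : R) :
  a1^2 + a2^2 = r^2 -> b1^2 + b2^2 = r^2 -> c1^2 + c2^2 = r^2 ->
  0 <= s -> 0 <= t -> 0 <= u -> s + t + u = 1 ->
  p1 = s*a1 + t*b1 + u*c1 -> p2 = s*a2 + t*b2 + u*c2 ->
  wa*a1 + wb*b1 + wc*c1 = 0 -> wa*a2 + wb*b2 + wc*c2 = 0 ->
  0 < wa + wb + wc -> wc < 0 ->
  4*(r^2 - (p1^2 + p2^2)) <= (a1-b1)^2 + (a2-b2)^2.
Proof.
intros ha hb hc hs ht hu hstu hp1 hp2 h1 h2 hsum hneg.
apply (chord_far_side_bound r a1 a2 b1 b2 ha hb c1 c2 p1 p2 s t u); auto.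
exact (negative_weight_far_side r a1 a2 b1 b2 c1 c2 ha hb wa wb wc h1 h2 hsum hneg).
Qed.

Lemma long_edge_from_weights (r a1 a2 b1 b2 c1 c2 p1 p2 s t u wa wb wc : R) :
  0 < r -> a1^2 + a2^2 = r^2 -> b1^2 + b2^2 = r^2 -> c1^2 + c2^2 = r^2 ->
  0 <= s -> 0 <= t -> 0 <= u -> s + t + u = 1 ->
  p1 = s*a1 + t*b1 + u*c1 -> p2 = s*a2 + t*b2 + u*c2 ->
  wa*a1 + wb*b1 + wc*c1 = 0 -> wa*a2 + wb*b2 + wc*c2 = 0 -> 0 < wa + wb + wc ->
  let K := Rmin (3*r^2) (4*(r^2 - (p1^2 + p2^2))) in
  K <= (a1-b1)^2 + (a2-b2)^2 \/ K <= (b1-c1)^2 + (b2-c2)^2 \/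
  K <= (c1-a1)^2 + (c2-a2)^2.
Proof.
intros hr ha hb hc hs ht hu hstu hp1 hp2 h1 h2 hsum K.
assert (K3 : K <= 3*r^2) by apply Rmin_l.
assert (K4 : K <= 4*(r^2 - (p1^2 + p2^2))) by apply Rmin_r.
destruct (Rlt_or_le wc 0) as [nc|nc].
{ left. apply (Rle_trans _ _ _ K4).
  apply (negative_weight_long_chord r a1 a2 b1 b2 c1 c2 p1 p2 s t u wa wb wc); auto. }
destruct (Rlt_or_le wa 0) as [na|na].
{ right; left. apply (Rle_trans _ _ _ K4).
  apply (negative_weight_long_chord r b1 b2 c1 c2 a1 a2 p1 p2 t u s wb wc wa); auto; lra. }
destruct (Rlt_or_le wb 0) as [nb|nb].
{ right; right. apply (Rle_trans _ _ _ K4).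
  apply (negative_weight_long_chord r c1 c2 a1 a2 b1 b2 p1 p2 u s t wc wa wb); auto; lra. }
destruct (centre_inside_long_edge r a1 a2 b1 b2 c1 c2 ha hb hc wa wb wc)
  as [l|[l|l]]; auto; lra.
Qed.

(* The centre has barycentric weights proportional to the oriented areas of
   the triangles obc, oca, oab; their sum is nonzero by non-collinearity, and
   flipping all signs makes it positive. *)
Lemma long_edge_centred (r : R) (a b c p : point) :
  0 < r -> norm2 a = r^2 -> norm2 b = r^2 -> norm2 c = r^2 ->
  a <> b -> b <> c -> c <> a -> in_triangle a b c p ->
  let K := Rmin (3*r^2) (4*(r^2 - norm2 p)) in
  K <= sqdist a b \/ K <= sqdist b c \/ K <= sqdist c a.
Proof.
intros hr ha hb hc nab nbc nca [s [t [u [hs [ht [hu [hstu [hp1 hp2]]]]]]]].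
apply sqdist_pos_of_neq in nab, nbc, nca.
destruct a as [a1 a2], b as [b1 b2], c as [c1 c2], p as [p1 p2].
unfold norm2, sqdist in *; simpl in *.
pose proof (circle_points_not_collinear r a1 a2 b1 b2 c1 c2 ha hb hc nab nbc nca) as harea.
set (wa := b1*c2 - b2*c1) in *; set (wb := c1*a2 - c2*a1) in *;
set (wc := a1*b2 - a2*b1) in *.
destruct (Rlt_or_le 0 (wa + wb + wc)) as [pos|neg].
- apply (long_edge_from_weights r a1 a2 b1 b2 c1 c2 p1 p2 s t u wa wb wc);
    auto; unfold wa, wb, wc; ring.
- apply (long_edge_from_weights r a1 a2 b1 b2 c1 c2 p1 p2 s t u (-wa) (-wb) (-wc));
    auto; [unfold wa, wb, wc; ring | unfold wa, wb, wc; ring | ].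
  destruct neg; [lra | contradiction].
Qed.

Definition shift (o p : point) : point := (fst p - fst o, snd p - snd o).

Lemma sqdist_shift (o p q : point) : sqdist (shift o p) (shift o q) = sqdist p q.
Proof. unfold sqdist, shift; simpl; ring. Qed.

Lemma norm2_shift (o p : point) : norm2 (shift o p) = sqdist o p.
Proof. unfold norm2, sqdist, shift; simpl; ring. Qed.

Lemma shift_inj (o p q : point) : p <> q -> shift o p <> shift o q.
Proof.
intros hneq e; apply hneq; destruct p as [p1 p2], q as [q1 q2].
unfold shift in e; simpl in e; injection e as e1 e2.
f_equal; lra.
Qed.

Lemma in_triangle_shift (o a b c p : point) :
  in_triangle a b c p -> in_triangle (shift o a) (shift o b) (shift o c) (shift o p).
Proof.
intros [s [t [u [hs [ht [hu [hstu [hp1 hp2]]]]]]]].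
exists s, t, u; unfold shift; simpl; rewrite hp1, hp2.
repeat split; auto; replace (fst o) with ((s + t + u) * fst o) at 1 by (rewrite hstu; ring);
  replace (snd o) with ((s + t + u) * snd o) at 1 by (rewrite hstu; ring); ring.
Qed.

Lemma admissible_long_edge (o p a b c : point) (r : R) :
  0 < r -> admissible o r p a b c ->
  sqrt (Rmin (3*r^2) (4*(r^2 - sqdist o p))) <= max_edge a b c.
Proof.
intros hr [nab [nbc [nca [ha [hb [hc hin]]]]]].
apply sqrt_le_max_edge.
rewrite <- (sqdist_shift o a b), <- (sqdist_shift o b c), <- (sqdist_shift o c a),
  <- (norm2_shift o p).
apply long_edge_centred; auto using shift_inj, in_triangle_shift;
  rewrite norm2_shift; apply on_circle_sqdist; assumption.
Qed.

(* If |op'| <= r/2, the inscribed equilateral triangle with a vertex in the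
   direction of the first axis contains p' (its incircle has radius r/2) and
   has all edges equal to sqrt 3 r. *)
Lemma equilateral_witness (o p : point) (r : R) :
  0 < r -> sqdist o p <= r^2/4 ->
  exists a b c, admissible o r p a b c /\ max_edge a b c = sqrt 3 * r.
Proof.
intros hr hp.
assert (q3 : sqrt 3 ^ 2 = 3) by (apply pow2_sqrt; lra).
assert (p3 : 0 < sqrt 3) by (apply sqrt_lt_R0; lra).
set (s3 := sqrt 3) in *.
destruct o as [o1 o2], p as [p1 p2]; unfold sqdist in hp; simpl in hp.
set (x := p1 - o1); set (y := p2 - o2).
assert (hxy : x^2 + y^2 <= r^2/4) by (unfold x, y; nra).
set (a := (o1 + r, o2)); set (b := (o1 - r/2, o2 + r*s3/2)); set (c := (o1 - r/2, o2 - r*s3/2)).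
exists a, b, c.
assert (eab : sqdist a b = (s3*r)^2) by (unfold sqdist; simpl; nra).
assert (ebc : sqdist b c = (s3*r)^2) by (unfold sqdist; simpl; nra).
assert (eca : sqdist c a = (s3*r)^2) by (unfold sqdist; simpl; nra).
assert (hedge : 0 < (s3*r)^2) by (apply pow_lt; nra).
split.
2:{ unfold max_edge.
    assert (hsr : 0 <= s3*r) by nra.
    rewrite (edist_of_sqdist a b _ hsr eab), (edist_of_sqdist b c _ hsr ebc),
      (edist_of_sqdist c a _ hsr eca).
    unfold Rmax; now repeat destruct Rle_dec. }
repeat split; try (apply neq_of_sqdist_pos; lra);
  try (apply on_circle_of_sqdist; [lra | unfold sqdist; simpl; nra]).
(* barycentric coordinates of p'; they are nonnegative because p' lies in the
   disc of radius r/2, inscribed in the triangle *)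
assert (hx : -(r/2) <= x) by nra.
assert (h1 : x - s3*y <= r).
{ assert (e : 4*(x^2 + y^2) - (x - s3*y)^2 = (s3*x + y)^2) by nra.
  pose proof (pow2_ge_0 (s3*x + y)). nra. }
assert (h2 : x + s3*y <= r).
{ assert (e : 4*(x^2 + y^2) - (x + s3*y)^2 = (s3*x - y)^2) by nra.
  pose proof (pow2_ge_0 (s3*x - y)). nra. }
exists ((2*x + r)/(3*r)), ((r - x + s3*y)/(3*r)), ((r - x - s3*y)/(3*r)).
assert (ir : 0 < /(3*r)) by (apply Rinv_0_lt_compat; lra).
unfold Rdiv, a, b, c; simpl.
repeat split; try (apply Rmult_le_pos; lra).
- field; lra.
- unfold x; field; lra.
- unfold y; field_simplify; [|lra]. replace (s3^2) with 3. field; lra.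
Qed.

Lemma polar_form (o p : point) :
  0 < sqdist o p ->
  exists lam e1 e2, 0 < lam /\ lam^2 = sqdist o p /\ e1^2 + e2^2 = 1 /\
    fst p = fst o + lam*e1 /\ snd p = snd o + lam*e2.
Proof.
intro hpos.
assert (hl : sqrt (sqdist o p) ^ 2 = sqdist o p) by (apply pow2_sqrt; lra).
assert (hl0 : 0 < sqrt (sqdist o p)) by (apply sqrt_lt_R0; lra).
set (lam := sqrt (sqdist o p)) in *.
exists lam, ((fst p - fst o)/lam), ((snd p - snd o)/lam).
repeat split; auto; try (field; lra).
replace (((fst p - fst o)/lam)^2 + ((snd p - snd o)/lam)^2) with (sqdist o p / lam^2)
  by (unfold sqdist; field; lra).
rewrite hl; field; lra.
Qed.

(* If 0 < |op'| < r, the triangle formed by the chord through p' perpendicular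
   to op' and the far end of the diameter through p' contains p' (the midpoint
   of the chord); the chord, of length 2 sqrt (r^2 - |op'|^2), is its longest
   edge. *)
Lemma chord_witness (o p : point) (r : R) :
  0 < r -> 0 < sqdist o p -> sqdist o p < r^2 ->
  exists a b c, admissible o r p a b c /\ max_edge a b c = 2 * sqrt (r^2 - sqdist o p).
Proof.
intros hr hpos hlt.
destruct (polar_form o p hpos) as [lam [e1 [e2 [hl [hlsq [he [hp1 hp2]]]]]]].
rewrite <- hlsq in hlt |- *.
assert (hlr : lam < r) by nra.
assert (hh : sqrt (r^2 - lam^2) ^ 2 = r^2 - lam^2) by (apply pow2_sqrt; lra).
assert (hh0 : 0 < sqrt (r^2 - lam^2)) by (apply sqrt_lt_R0; lra).
set (h := sqrt (r^2 - lam^2)) in *.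
destruct o as [o1 o2], p as [p1 p2]; simpl in hp1, hp2; subst p1 p2.
set (a := (o1 + lam*e1 - h*e2, o2 + lam*e2 + h*e1));
set (b := (o1 + lam*e1 + h*e2, o2 + lam*e2 - h*e1));
set (c := (o1 + r*e1, o2 + r*e2)).
exists a, b, c.
assert (eab : sqdist a b = (2*h)^2).
{ unfold sqdist; simpl.
  transitivity (4*h^2*(e1^2 + e2^2)); [ring | rewrite he; ring]. }
(* the two short edges: (r - lam)^2 + h^2 <= (2 h)^2 since r <= 2 (r + lam) *)
assert (hshort : (r - lam)^2 + h^2 <= (2*h)^2).
{ assert (0 < (r - lam)*(2*r + 4*lam)) by (apply Rmult_lt_0_compat; lra). nra. }
assert (ebc : sqdist b c = (r - lam)^2 + h^2).
{ unfold sqdist; simpl.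
  transitivity (((r - lam)^2 + h^2)*(e1^2 + e2^2)); [ring | rewrite he; ring]. }
assert (eca : sqdist c a = (r - lam)^2 + h^2).
{ unfold sqdist; simpl.
  transitivity (((r - lam)^2 + h^2)*(e1^2 + e2^2)); [ring | rewrite he; ring]. }
split.
2:{ unfold max_edge.
    rewrite (edist_of_sqdist a b (2*h)) by (auto; lra).
    apply Rmax_left; apply Rmax_lub; apply edist_le_of_sqdist; lra. }
assert (hsq : forall q, sqdist (o1, o2) q = (fst q - o1)^2 + (snd q - o2)^2)
  by (intro q; unfold sqdist; simpl; ring).
repeat split; try (apply neq_of_sqdist_pos; nra);
  try (apply on_circle_of_sqdist; [lra | rewrite hsq; simpl; nra]).
exists (1/2), (1/2), 0; simpl; repeat split; try lra; ring.
Qed.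

Theorem mainTheorem15 (o p : point) (r : R) (hr : 0 < r)
  (hp : edist o p < r) :
  (r / 2 <= edist o p ->
     is_MinMax o r p (2 * sqrt (r ^ 2 - (edist o p) ^ 2))) /\
  (edist o p <= r / 2 -> is_MinMax o r p (sqrt 3 * r)).
Proof.
pose proof (edist_sq o p) as hsq.
assert (hl0 : 0 <= edist o p) by apply sqrt_pos.
set (lam := edist o p) in *.
assert (hlr : lam^2 < r^2) by nra.
split; intro hcase; split.
- rewrite hsq; apply chord_witness; nra.
- intros a b c had.
  pose proof (admissible_long_edge o p a b c r hr had) as hlow.
  rewrite <- hsq, Rmin_right in hlow by nra.
  replace (4 * (r^2 - lam^2)) with (2^2 * (r^2 - lam^2)) in hlow by ring.
  rewrite sqrt_sq_mult in hlow by lra; exact hlow.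
- apply equilateral_witness; nra.
- intros a b c had.
  pose proof (admissible_long_edge o p a b c r hr had) as hlow.
  rewrite <- hsq, Rmin_left in hlow by nra.
  rewrite Rmult_comm, sqrt_sq_mult in hlow by lra.
  now rewrite Rmult_comm.
Qed.
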